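(* Let $\mathbf{D}$ be a 2-category with an enhanced factorization system $(\mathcal{E},\mathcal{M})$ and let $\mathbf{C}$ be a small 2-category. Suppose that $(\mathcal{E},\mathcal{M})$ separates parallel pairs, every 1-cell in $\mathcal{E}$ is a 2-epimorphism, and every 1-cell in $\mathcal{M}$ is a 2-monomorphism. Then $(\mathcal{E}^{\mathbf{C}},\mathcal{M}^{\mathbf{C}})$ is an enhanced factorization system on $\mathbf{D}^{\mathbf{C}}$.
   Context: For a 2-category $\mathbf{A}$, an enhanced factorization system on $\mathbf{A}$ is a pair $(\mathcal{E},\mathcal{M})$ of classes of 1-cells of $\mathbf{A}$, each containing all isomorphisms, such that: (i) every 1-cell $\alpha$ factors (not necessarily uniquely) as $\alpha=\mu\circ\varepsilon$ with $\varepsilon\in\mathcal{E}$, $\mu\in\mathcal{M}$; (ii) given $\varepsilon\colon F\to F'$ in $\mathcal{E}$, $\mu\colon G\to G'$ in $\mathcal{M}$, 1-cells $\alpha\colon F\to G$, $\alpha'\colon F'\to G'$ and an invertible 2-cell $\Psi\colon \alpha'\varepsilon\Rightarrow\mu\alpha$, there is a unique pair $(\delta,\widetilde\Psi)$ with $\delta\colon F'\to G$ a 1-cell and $\widetilde\Psi\colon\alpha'\Rightarrow\mu\delta$ an invertible 2-cell such that $\delta\varepsilon=\alpha$ and the whiskering $\widetilde\Psi\varepsilon=\Psi$; moreover if $\Psi$ is an identity then $\mu\delta=\alpha'$ and $\widetilde\Psi$ is an identity; (iii) given $\varepsilon\colon F\to F'$ in $\mathcal{E}$, $\mu\colon G\to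 G'$ in $\mathcal{M}$, parallel 1-cells $\alpha_1,\alpha_2\colon F\to G$ and $\alpha_1',\alpha_2'\colon F'\to G'$ with $\alpha_i'\varepsilon=\mu\alpha_i$ ($i=1,2$), and 2-cells $\Phi\colon\alpha_1\Rightarrow\alpha_2$, $\Phi'\colon\alpha_1'\Rightarrow\alpha_2'$ with $\mu\Phi=\Phi'\varepsilon$, let $\delta_i\colon F'\to G$ be the unique 1-cells with $\delta_i\varepsilon=\alpha_i$ and $\mu\delta_i=\alpha_i'$ (from (ii) with identity 2-cell); then there is a unique 2-cell $\Delta\colon\delta_1\Rightarrow\delta_2$ with $\Delta\varepsilon=\Phi$ and $\mu\Delta=\Phi'$. $(\mathcal{E},\mathcal{M})$ separates parallel pairs if whenever $\alpha,\beta\colon F\to G$ are parallel 1-cells for which there exist $\varepsilon\in\mathcal{E}$ with target $F$ and $\alpha\varepsilon=\beta\varepsilon$, and $\mu\in\mathcal{M}$ with source $G$ and $\mu\alpha=\mu\beta$, then $\alpha=\beta$. A 1-cell $\varepsilon\colon F\to G$ is a 2-epimorphism if for all 1-cells $\beta,\beta'\colon G\to H$ and 2-cells $\Psi,\Psi'\colon\beta\Rightarrow\beta'$, $\Psi\varepsilon=\Psi'\varepsilon$ implies $\Psi=\Psi'$. A 1-cell $\mu\colon G\to H$ is a 2-monomorphism if for all 1-cells $\beta,\beta'\colon F\to G$ and 2-cells $\Psi,\Psi'\colon\beta\Rightarrow\beta'$, $\mu\Psi=\mu\Psi'$ implies $\Psi=\Psi'$. $\mathbf{D}^{\mathbf{C}}$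 is the 2-category of 2-functors $\mathbf{C}\to\mathbf{D}$, 2-natural transformations, and modifications. $\mathcal{E}^{\mathbf{C}}$ (resp. $\mathcal{M}^{\mathbf{C}}$) is the class of 2-natural transformations all of whose components lie in $\mathcal{E}$ (resp. $\mathcal{M}$). *)

From Stdlib Require Import Eqdep.

Record Cat2Data := {
  ob : Type;
  hom : ob -> ob -> Type;
  cell : forall a b : ob, hom a b -> hom a b -> Type;
  id1 : forall a : ob, hom a a;
  comp1 : forall a b c : ob, hom b c -> hom a b -> hom a c;      (* comp1 g f = g o f *)
  id2 : forall (a b : ob) (f : hom a b), cell a b f f;
  vcomp : forall (a b : ob) (f g h : hom a b),
      cell a b g h -> cell a b f g -> cell a b f h;
  hcomp : forall (a b c : ob) (f f' : hom a b) (g g' : hom b c),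
      cell b c g g' -> cell a b f f' -> cell a c (comp1 a b c g f) (comp1 a b c g' f')
}.
Arguments hom {_} _ _.
Arguments cell {_ _ _} _ _.
Arguments id1 {_} _.
Arguments comp1 {_ _ _ _} _ _.
Arguments id2 {_ _ _} _.
Arguments vcomp {_ _ _ _ _ _} _ _.
Arguments hcomp {_ _ _ _ _ _ _ _} _ _.

(** Equality of 2-cells whose boundaries are (propositionally) equal 1-cells. *)
Definition cheq {D : Cat2Data} {a b : ob D} {f g f' g' : hom a b}
  (x : cell f g) (x' : cell f' g') : Prop :=
  existT (fun p : hom a b * hom a b => cell (fst p) (snd p)) (f, g) x
  = existT (fun p : hom a b * hom a b => cell (fst p) (snd p)) (f', g') x'.

Lemma cheq_refl {D : Cat2Data} {a b : ob D} {f g : hom a b} (x : cell f g) : cheq x x.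
Proof. reflexivity. Qed.

Lemma cheq_sym {D : Cat2Data} {a b : ob D} {f g f' g' : hom a b}
  (x : cell f g) (x' : cell f' g') : cheq x x' -> cheq x' x.
Proof. unfold cheq; intros H; symmetry; exact H. Qed.

Lemma cheq_trans {D : Cat2Data} {a b : ob D} {f g f' g' f'' g'' : hom a b}
  (x : cell f g) (x' : cell f' g') (x'' : cell f'' g'') :
  cheq x x' -> cheq x' x'' -> cheq x x''.
Proof. unfold cheq; intros H1 H2; rewrite H1; exact H2. Qed.

Lemma cheq_ends {D : Cat2Data} {a b : ob D} {f g f' g' : hom a b}
  (x : cell f g) (x' : cell f' g') : cheq x x' -> f = f' /\ g = g'.
Proof.
  unfold cheq; intros H.
  pose proof (f_equal (@projT1 _ _) H) as H1; simpl in H1.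
  injection H1; auto.
Qed.

Lemma cheq_eq {D : Cat2Data} {a b : ob D} {f g : hom a b} (x x' : cell f g) :
  cheq x x' -> x = x'.
Proof. unfold cheq; intros H. exact (inj_pair2 _ _ _ _ _ H). Qed.

Lemma hcomp_cheq {D : Cat2Data} {a b c : ob D}
  {f1 f1' f2 f2' : hom a b} {g1 g1' g2 g2' : hom b c}
  (y : cell g1 g1') (x : cell f1 f1') (y' : cell g2 g2') (x' : cell f2 f2') :
  cheq y y' -> cheq x x' -> cheq (hcomp y x) (hcomp y' x').
Proof.
  intros Hy Hx.
  destruct (cheq_ends _ _ Hy) as [e1 e2]; subst g2 g2'.
  destruct (cheq_ends _ _ Hx) as [e1 e2]; subst f2 f2'.
  apply cheq_eq in Hy; apply cheq_eq in Hx; subst; reflexivity.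
Qed.

Lemma vcomp_cheq {D : Cat2Data} {a b : ob D} {f g h f' g' h' : hom a b}
  (y : cell g h) (x : cell f g) (y' : cell g' h') (x' : cell f' g') :
  cheq y y' -> cheq x x' -> cheq (vcomp y x) (vcomp y' x').
Proof.
  intros Hy Hx.
  destruct (cheq_ends _ _ Hy) as [e1 e2]; subst g' h'.
  destruct (cheq_ends _ _ Hx) as [e1 _]; subst f'.
  apply cheq_eq in Hy; apply cheq_eq in Hx; subst; reflexivity.
Qed.

Record is_strict_2cat (D : Cat2Data) : Prop := {
  c1_assoc : forall (a b c d : ob D) (f : hom a b) (g : hom b c) (h : hom c d),
      comp1 h (comp1 g f) = comp1 (comp1 h g) f;
  c1_idl : forall (a b : ob D) (f : hom a b), comp1 (id1 b) f = f;
  c1_idr : forall (a b : ob D) (f : hom a b), comp1 f (id1 a) = f;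
  v_assoc : forall (a b : ob D) (f g h k : hom a b)
      (x : cell f g) (y : cell g h) (z : cell h k),
      vcomp z (vcomp y x) = vcomp (vcomp z y) x;
  v_idl : forall (a b : ob D) (f g : hom a b) (x : cell f g), vcomp (id2 g) x = x;
  v_idr : forall (a b : ob D) (f g : hom a b) (x : cell f g), vcomp x (id2 f) = x;
  h_id : forall (a b c : ob D) (f : hom a b) (g : hom b c),
      hcomp (id2 g) (id2 f) = id2 (comp1 g f);
  interchange : forall (a b c : ob D) (f f' f'' : hom a b) (g g' g'' : hom b c)
      (x : cell f f') (x' : cell f' f'') (y : cell g g') (y' : cell g' g''),
      vcomp (hcomp y' x') (hcomp y x) = hcomp (vcomp y' y) (vcomp x' x);
  h_assoc : forall (a b c d : ob D) (f f' : hom a b) (g g' : hom b c) (h h' : hom c d)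
      (x : cell f f') (y : cell g g') (z : cell h h'),
      cheq (hcomp z (hcomp y x)) (hcomp (hcomp z y) x);
  h_idl : forall (a b : ob D) (f f' : hom a b) (x : cell f f'),
      cheq (hcomp (id2 (id1 b)) x) x;
  h_idr : forall (a b : ob D) (f f' : hom a b) (x : cell f f'),
      cheq (hcomp x (id2 (id1 a))) x
}.

Record Cat2 := { c2data :> Cat2Data; c2ax : is_strict_2cat c2data }.

Record Fun2 (C D : Cat2) := {
  fob : ob C -> ob D;
  fhom : forall a b : ob C, hom a b -> hom (fob a) (fob b);
  fcell : forall (a b : ob C) (f g : hom a b), cell f g -> cell (fhom a b f) (fhom a b g);
  fid1 : forall a : ob C, fhom a a (id1 a) = id1 (fob a);
  fcomp1 : forall (a b c : ob C) (f : hom a b) (g : hom b c),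
      fhom a c (comp1 g f) = comp1 (fhom b c g) (fhom a b f);
  fid2 : forall (a b : ob C) (f : hom a b), fcell a b f f (id2 f) = id2 (fhom a b f);
  fvcomp : forall (a b : ob C) (f g h : hom a b) (x : cell f g) (y : cell g h),
      fcell a b f h (vcomp y x) = vcomp (fcell a b g h y) (fcell a b f g x);
  fhcomp : forall (a b c : ob C) (f f' : hom a b) (g g' : hom b c)
      (x : cell f f') (y : cell g g'),
      cheq (fcell a c _ _ (hcomp y x)) (hcomp (fcell b c g g' y) (fcell a b f f' x))
}.
Arguments fob {C D} _ _.
Arguments fhom {C D} _ {a b} _.
Arguments fcell {C D} _ {a b f g} _.

Record Nat2 {C D : Cat2} (F G : Fun2 C D) := {
  ncomp : forall X : ob C, hom (fob F X) (fob G X);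
  nat1 : forall (X Y : ob C) (f : hom X Y),
      comp1 (fhom G f) (ncomp X) = comp1 (ncomp Y) (fhom F f);
  nat2 : forall (X Y : ob C) (f g : hom X Y) (p : cell f g),
      cheq (hcomp (fcell G p) (id2 (ncomp X))) (hcomp (id2 (ncomp Y)) (fcell F p))
}.
Arguments ncomp {C D F G} _ _.
Arguments nat1 {C D F G} _ {X Y} _.
Arguments nat2 {C D F G} _ {X Y f g} _.

Record Modif {C D : Cat2} {F G : Fun2 C D} (al be : Nat2 F G) := {
  mcomp : forall X : ob C, cell (ncomp al X) (ncomp be X);
  mnat : forall (X Y : ob C) (f : hom X Y),
      cheq (hcomp (id2 (fhom G f)) (mcomp X)) (hcomp (mcomp Y) (id2 (fhom F f)))
}.
Arguments mcomp {C D F G al be} _ _.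
Arguments mnat {C D F G al be} _ {X Y} _.

Section FunCat.
Variables C D : Cat2.
Let DA := c2ax D.

Definition nat_id (F : Fun2 C D) : Nat2 F F.
Proof.
  refine {| ncomp := fun X => id1 (fob F X) |}.
  - intros X Y f. rewrite (c1_idr _ DA), (c1_idl _ DA). reflexivity.
  - intros X Y f g p. eapply cheq_trans; [apply (h_idr _ DA)|].
    apply cheq_sym, (h_idl _ DA).
Defined.

Definition nat_comp (F G H : Fun2 C D) (be : Nat2 G H) (al : Nat2 F G) : Nat2 F H.
Proof.
  refine {| ncomp := fun X => comp1 (ncomp be X) (ncomp al X) |}.
  - intros X Y f.
    rewrite (c1_assoc _ DA), (nat1 be f), <- (c1_assoc _ DA), (nat1 al f), (c1_assoc _ DA).
    reflexivity.
  - intros X Y f g p.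
    rewrite <- (h_id _ DA).
    eapply cheq_trans; [apply (h_assoc _ DA)|].
    eapply cheq_trans; [eapply hcomp_cheq; [apply (nat2 be p)|apply cheq_refl]|].
    eapply cheq_trans; [apply cheq_sym, (h_assoc _ DA)|].
    eapply cheq_trans; [eapply hcomp_cheq; [apply cheq_refl|apply (nat2 al p)]|].
    eapply cheq_trans; [apply (h_assoc _ DA)|].
    rewrite (h_id _ DA). apply cheq_refl.
Defined.

Definition modif_id (F G : Fun2 C D) (al : Nat2 F G) : Modif al al.
Proof.
  refine {| mcomp := fun X => id2 (ncomp al X) |}.
  intros X Y f. rewrite !(h_id _ DA), (nat1 al f). apply cheq_refl.
Defined.

Lemma hcomp_id2_l_vcomp (a b c : ob D) (g : hom b c) (f f' f'' : hom a b)
  (x : cell f f') (x' : cell f' f'') :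
  hcomp (id2 g) (vcomp x' x) = vcomp (hcomp (id2 g) x') (hcomp (id2 g) x).
Proof. rewrite (interchange _ DA), (v_idl _ DA). reflexivity. Qed.

Lemma hcomp_id2_r_vcomp (a b c : ob D) (f : hom a b) (g g' g'' : hom b c)
  (y : cell g g') (y' : cell g' g'') :
  hcomp (vcomp y' y) (id2 f) = vcomp (hcomp y' (id2 f)) (hcomp y (id2 f)).
Proof. rewrite (interchange _ DA), (v_idl _ DA). reflexivity. Qed.

Definition modif_vcomp (F G : Fun2 C D) (al be ga : Nat2 F G)
  (n : Modif be ga) (m : Modif al be) : Modif al ga.
Proof.
  refine {| mcomp := fun X => vcomp (mcomp n X) (mcomp m X) |}.
  intros X Y f.
  rewrite hcomp_id2_l_vcomp, hcomp_id2_r_vcomp.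
  eapply vcomp_cheq; [apply (mnat n f)|apply (mnat m f)].
Defined.

Definition modif_hcomp (F G H : Fun2 C D) (al al' : Nat2 F G) (be be' : Nat2 G H)
  (n : Modif be be') (m : Modif al al') :
  Modif (nat_comp F G H be al) (nat_comp F G H be' al').
Proof.
  refine {| mcomp := fun X => (hcomp (mcomp n X) (mcomp m X)
            : cell (ncomp (nat_comp F G H be al) X) (ncomp (nat_comp F G H be' al') X)) |}.
  intros X Y f; simpl.
  assert (E : forall Z, hcomp (mcomp n Z) (mcomp m Z)
     = vcomp (hcomp (mcomp n Z) (id2 (ncomp al' Z))) (hcomp (id2 (ncomp be Z)) (mcomp m Z))).
  { intros Z. rewrite (interchange _ DA), (v_idl _ DA), (v_idr _ DA). reflexivity. }
  rewrite !E, hcomp_id2_l_vcomp, hcomp_id2_r_vcomp.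
  eapply vcomp_cheq.
  - eapply cheq_trans; [apply (h_assoc _ DA)|].
    eapply cheq_trans; [eapply hcomp_cheq; [apply (mnat n f)|apply cheq_refl]|].
    eapply cheq_trans; [apply cheq_sym, (h_assoc _ DA)|].
    rewrite (h_id _ DA).
    eapply cheq_trans; [eapply hcomp_cheq; [apply cheq_refl|]|].
    { rewrite (nat1 al' f). apply cheq_refl. }
    rewrite <- (h_id _ DA). apply (h_assoc _ DA).
  - eapply cheq_trans; [apply (h_assoc _ DA)|].
    rewrite (h_id _ DA).
    eapply cheq_trans; [eapply hcomp_cheq; [|apply cheq_refl]|].
    { rewrite (nat1 be f). apply cheq_refl. }
    rewrite <- (h_id _ DA).
    eapply cheq_trans; [apply cheq_sym, (h_assoc _ DA)|].
    eapply cheq_trans; [eapply hcomp_cheq; [apply cheq_refl|apply (mnat m f)]|].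
    apply (h_assoc _ DA).
Defined.

Definition FunCat : Cat2Data := {|
  ob := Fun2 C D;
  hom := fun F G => Nat2 F G;
  cell := fun F G al be => Modif al be;
  id1 := nat_id;
  comp1 := nat_comp;
  id2 := modif_id;
  vcomp := modif_vcomp;
  hcomp := modif_hcomp
|}.

End FunCat.

Definition Cls (D : Cat2Data) := forall a b : ob D, hom a b -> Prop.

Definition is_iso1 {D : Cat2Data} {a b : ob D} (f : hom a b) : Prop :=
  exists g : hom b a, comp1 g f = id1 a /\ comp1 f g = id1 b.

Definition invertible2 {D : Cat2Data} {a b : ob D} {f g : hom a b} (x : cell f g) : Prop :=
  exists y : cell g f, vcomp y x = id2 f /\ vcomp x y = id2 g.

Definition whiskR {D : Cat2Data} {a b c : ob D} {g g' : hom b c} (x : cell g g') (f : hom a b)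
  : cell (comp1 g f) (comp1 g' f) := hcomp x (id2 f).
Definition whiskL {D : Cat2Data} {a b c : ob D} (g : hom b c) {f f' : hom a b} (x : cell f f')
  : cell (comp1 g f) (comp1 g f') := hcomp (id2 g) x.

(** (delta, Psi~) solves the lifting problem (e, m, al, al', Psi) as in (ii) *)
Definition lift_sol {D : Cat2Data} {F F' G G' : ob D} (e : hom F F') (m : hom G G')
  (al : hom F G) (al' : hom F' G') (Psi : cell (comp1 al' e) (comp1 m al))
  (d : hom F' G) (Pt : cell al' (comp1 m d)) : Prop :=
  comp1 d e = al /\ invertible2 Pt /\ cheq (whiskR Pt e) Psi.

Record is_efs (D : Cat2Data) (E M : Cls D) : Prop := {
  efs_E_iso : forall (a b : ob D) (f : hom a b), is_iso1 f -> E a b f;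
  efs_M_iso : forall (a b : ob D) (f : hom a b), is_iso1 f -> M a b f;
  efs_fact : forall (a b : ob D) (f : hom a b),
      exists (c : ob D) (e : hom a c) (m : hom c b), E a c e /\ M c b m /\ f = comp1 m e;
  efs_lift : forall (F F' G G' : ob D) (e : hom F F') (m : hom G G')
      (al : hom F G) (al' : hom F' G') (Psi : cell (comp1 al' e) (comp1 m al)),
      E F F' e -> M G G' m -> invertible2 Psi ->
      exists (d : hom F' G) (Pt : cell al' (comp1 m d)),
        lift_sol e m al al' Psi d Pt /\
        forall (d' : hom F' G) (Pt' : cell al' (comp1 m d')),
          lift_sol e m al al' Psi d' Pt' ->
          existT (fun x => cell al' (comp1 m x)) d' Pt'
          = existT (fun x => cell al' (comp1 m x)) d Pt;
  efs_lift_id : forall (F F' G G' : ob D) (e : hom F F') (m : hom G G')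
      (al : hom F G) (al' : hom F' G') (Psi : cell (comp1 al' e) (comp1 m al)),
      E F F' e -> M G G' m -> cheq Psi (id2 (comp1 al' e)) ->
      forall (d : hom F' G) (Pt : cell al' (comp1 m d)),
        lift_sol e m al al' Psi d Pt -> comp1 m d = al' /\ cheq Pt (id2 al');
  efs_2cell : forall (F F' G G' : ob D) (e : hom F F') (m : hom G G')
      (a1 a2 : hom F G) (a1' a2' : hom F' G') (Phi : cell a1 a2) (Phi' : cell a1' a2'),
      E F F' e -> M G G' m ->
      comp1 a1' e = comp1 m a1 -> comp1 a2' e = comp1 m a2 ->
      cheq (whiskL m Phi) (whiskR Phi' e) ->
      forall d1 d2 : hom F' G,
        comp1 d1 e = a1 -> comp1 m d1 = a1' ->
        comp1 d2 e = a2 -> comp1 m d2 = a2' ->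
        exists! Dl : cell d1 d2, cheq (whiskR Dl e) Phi /\ cheq (whiskL m Dl) Phi'
}.

Definition separates_parallel_pairs {D : Cat2Data} (E M : Cls D) : Prop :=
  forall (F G : ob D) (al be : hom F G),
    (exists (F0 : ob D) (e : hom F0 F), E F0 F e /\ comp1 al e = comp1 be e) ->
    (exists (G0 : ob D) (m : hom G G0), M G G0 m /\ comp1 m al = comp1 m be) ->
    al = be.

Definition is_2epi {D : Cat2Data} {F G : ob D} (e : hom F G) : Prop :=
  forall (H : ob D) (b b' : hom G H) (x x' : cell b b'), whiskR x e = whiskR x' e -> x = x'.

Definition is_2mono {D : Cat2Data} {G H : ob D} (m : hom G H) : Prop :=
  forall (F : ob D) (b b' : hom F G) (x x' : cell b b'), whiskL m x = whiskL m x' -> x = x'.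

Definition pointwise (C D : Cat2) (E : Cls D) : Cls (FunCat C D) :=
  fun F G al => forall X : ob C, E (fob F X) (fob G X) (ncomp al X).

(* Everything in D^C is computed componentwise: factorizations, lifts and
   2-cells are chosen in D at each object X of C, and the only work is to show
   that the chosen pieces assemble into 2-functors, 2-natural transformations
   and modifications.  Equalities of 1-cells out of a component e_X of an
   E-map are checked after precomposing with e_X and postcomposing with an
   M-map, where the uniqueness in (ii) or the separation of parallel pairs
   applies; equalities of 2-cells are checked after whiskering with e_X, which
   is a 2-epimorphism. *)
From Stdlib Require Import Eqdep ClassicalEpsilon ProofIrrelevance FunctionalExtensionality.

Tactic Notation "cheq_step" tactic3(t) := eapply cheq_trans; [t|].

Section TwoCategory.
Variable D : Cat2.
Let DA := c2ax D.

Definition cell_of_eq {a b : ob D} {f g : hom a b} (H : f = g) : cell f g :=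
  match H in _ = g return cell f g with eq_refl => id2 f end.

Lemma cell_of_eq_cheq {a b : ob D} {f g : hom a b} (H : f = g) : cheq (cell_of_eq H) (id2 f).
Proof. destruct H; reflexivity. Qed.

Lemma invertible2_cell_of_eq {a b : ob D} {f g : hom a b} (H : f = g) :
  invertible2 (cell_of_eq H).
Proof. destruct H; exists (id2 f); simpl; split; apply (v_idl _ DA). Qed.

Lemma vcomp_cell_of_eq_l {a b : ob D} {f g h : hom a b} (H : g = h) (x : cell f g) :
  cheq (vcomp (cell_of_eq H) x) x.
Proof. destruct H; simpl; rewrite (v_idl _ DA); reflexivity. Qed.

Lemma vcomp_cell_of_eq_r {a b : ob D} {f g h : hom a b} (H : f = g) (x : cell g h) :
  cheq (vcomp x (cell_of_eq H)) x.
Proof. destruct H; simpl; rewrite (v_idr _ DA); reflexivity. Qed.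

Lemma invertible2_vcomp {a b : ob D} {f g h : hom a b} (x : cell f g) (y : cell g h) :
  invertible2 x -> invertible2 y -> invertible2 (vcomp y x).
Proof.
  intros [xi [Hx1 Hx2]] [yi [Hy1 Hy2]]. exists (vcomp xi yi). split.
  - rewrite <- (v_assoc _ DA), ((v_assoc _ DA) _ _ _ _ _ _ x y yi), Hy1, (v_idl _ DA).
    exact Hx1.
  - rewrite <- (v_assoc _ DA), ((v_assoc _ DA) _ _ _ _ _ _ yi xi x), Hx2, (v_idl _ DA).
    exact Hy2.
Qed.

Lemma invertible2_whiskR {a b c : ob D} {g g' : hom b c} (x : cell g g') (f : hom a b) :
  invertible2 x -> invertible2 (whiskR x f).
Proof.
  intros [xi [H1 H2]]. exists (whiskR xi f). unfold whiskR.
  rewrite !(interchange _ DA), H1, H2, !(v_idl _ DA), !(h_id _ DA). split; reflexivity.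
Qed.

Lemma invertible2_whiskL {a b c : ob D} (g : hom b c) {f f' : hom a b} (x : cell f f') :
  invertible2 x -> invertible2 (whiskL g x).
Proof.
  intros [xi [H1 H2]]. exists (whiskL g xi). unfold whiskL.
  rewrite !(interchange _ DA), H1, H2, !(v_idl _ DA), !(h_id _ DA). split; reflexivity.
Qed.

Lemma id2_cheq {a b : ob D} {f g : hom a b} : f = g -> cheq (id2 f) (id2 g).
Proof. intros ->; reflexivity. Qed.

Lemma h_id_cheq {a b c : ob D} (f : hom a b) (g : hom b c) :
  cheq (hcomp (id2 g) (id2 f)) (id2 (comp1 g f)).
Proof. rewrite (h_id _ DA); reflexivity. Qed.

Lemma hcomp_cheq_l {a b c : ob D} {f f' : hom a b} {g1 g1' g2 g2' : hom b c}
  (y : cell g1 g1') (y' : cell g2 g2') (x : cell f f') :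
  cheq y y' -> cheq (hcomp y x) (hcomp y' x).
Proof. intros H; apply hcomp_cheq; [exact H | apply cheq_refl]. Qed.

Lemma hcomp_cheq_r {a b c : ob D} {f1 f1' f2 f2' : hom a b} {g g' : hom b c}
  (y : cell g g') (x : cell f1 f1') (x' : cell f2 f2') :
  cheq x x' -> cheq (hcomp y x) (hcomp y x').
Proof. intros H; apply hcomp_cheq; [apply cheq_refl | exact H]. Qed.

Lemma whiskR_vcomp {a b c : ob D} {g g' g'' : hom b c} (y : cell g g') (y' : cell g' g'')
  (f : hom a b) : whiskR (vcomp y' y) f = vcomp (whiskR y' f) (whiskR y f).
Proof. unfold whiskR. rewrite (interchange _ DA), (v_idl _ DA). reflexivity. Qed.

Lemma whiskL_vcomp {a b c : ob D} (g : hom b c) {f f' f'' : hom a b} (x : cell f f')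
  (x' : cell f' f'') : whiskL g (vcomp x' x) = vcomp (whiskL g x') (whiskL g x).
Proof. unfold whiskL. rewrite (interchange _ DA), (v_idl _ DA). reflexivity. Qed.

Lemma inverse2_cheq {a b : ob D} {p q p' q' : hom a b}
  (x : cell p q) (x' : cell p' q') (y : cell q p) (y' : cell q' p') :
  vcomp y x = id2 p -> vcomp x y = id2 q -> vcomp y' x' = id2 p' -> vcomp x' y' = id2 q' ->
  cheq x x' -> cheq y y'.
Proof.
  intros H1 H2 H3 H4 H.
  destruct (cheq_ends _ _ H) as [-> ->]. apply cheq_eq in H; subst x.
  enough (y = y') by (subst; reflexivity).
  rewrite <- ((v_idr _ DA) _ _ _ _ y), <- H4, (v_assoc _ DA), H1, (v_idl _ DA).
  reflexivity.
Qed.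

Lemma is_2epi_cheq {F F' H : ob D} (e : hom F F') : is_2epi e ->
  forall (b b' c c' : hom F' H) (x : cell b b') (y : cell c c'),
  b = c -> b' = c' -> cheq (whiskR x e) (whiskR y e) -> cheq x y.
Proof.
  intros He b b' c c' x y -> -> Hc. apply cheq_eq in Hc.
  rewrite (He _ _ _ _ _ Hc). reflexivity.
Qed.

Lemma existT_cell_inj {a c d : ob D} (a' : hom a d) (m : hom c d) (x1 x2 : hom a c)
  (t1 : cell a' (comp1 m x1)) (t2 : cell a' (comp1 m x2)) :
  existT (fun x => cell a' (comp1 m x)) x1 t1 = existT (fun x => cell a' (comp1 m x)) x2 t2 ->
  x1 = x2 /\ cheq t1 t2.
Proof.
  intros H. assert (Hx : x1 = x2) by exact (f_equal (@projT1 _ _) H). subst x2.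
  apply inj_pair2 in H. subst. split; reflexivity.
Qed.

(* With [ex] a 2-epimorphism, this is what makes componentwise lifts of 2-cells natural. *)
Lemma whiskR_pasting_square (a b a' b' t t' : ob D) (ex : hom a b) (ey : hom a' b')
  (fa : hom a a') (fb : hom b b') (gt : hom t t') (Hsq : comp1 fb ex = comp1 ey fa)
  (u v : hom b t) (u' v' : hom b' t') (x : cell u v) (y : cell u' v')
  (zu zv : hom a t) (zx : cell zu zv) (zu' zv' : hom a' t') (zy : cell zu' zv')
  (Hx : cheq (whiskR x ex) zx) (Hy : cheq (whiskR y ey) zy)
  (Hz : cheq (hcomp (id2 gt) zx) (hcomp zy (id2 fa))) :
  cheq (whiskR (hcomp (id2 gt) x) ex) (whiskR (hcomp y (id2 fb)) ex).
Proof.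
  unfold whiskR in *.
  cheq_step (eapply cheq_sym, (h_assoc _ DA)).
  cheq_step (eapply hcomp_cheq_r; exact Hx).
  cheq_step (exact Hz).
  cheq_step (eapply hcomp_cheq_l; apply cheq_sym; exact Hy).
  cheq_step (eapply cheq_sym, (h_assoc _ DA)).
  cheq_step (eapply hcomp_cheq_r; apply h_id_cheq).
  cheq_step (eapply hcomp_cheq_r; apply id2_cheq; symmetry; exact Hsq).
  cheq_step (eapply hcomp_cheq_r; apply cheq_sym, h_id_cheq).
  apply (h_assoc _ DA).
Qed.

End TwoCategory.

Section FunctorCategory.
Context {C D : Cat2}.
Let DA := c2ax D.

Lemma nat2_ext {F G : Fun2 C D} (n n' : Nat2 F G) :
  (forall X, ncomp n X = ncomp n' X) -> n = n'.
Proof.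
  destruct n as [c1 a1 b1], n' as [c2 a2 b2]; simpl; intros H.
  assert (c1 = c2) by (apply functional_extensionality_dep; exact H). subst c2.
  rewrite (proof_irrelevance _ a1 a2), (proof_irrelevance _ b1 b2). reflexivity.
Qed.

Lemma nat2_eq_components {F G : Fun2 C D} {n n' : Nat2 F G} :
  n = n' -> forall X, ncomp n X = ncomp n' X.
Proof. intros ->; reflexivity. Qed.

Lemma modif_ext {F G : Fun2 C D} {al be : Nat2 F G} (x y : Modif al be) :
  (forall X, mcomp x X = mcomp y X) -> x = y.
Proof.
  destruct x as [c1 a1], y as [c2 a2]; simpl; intros H.
  assert (c1 = c2) by (apply functional_extensionality_dep; exact H). subst c2.
  rewrite (proof_irrelevance _ a1 a2). reflexivity.
Qed.

Lemma funcat_cheq_of_components {F G : Fun2 C D} {al be al' be' : Nat2 F G}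
  (x : Modif al be) (y : Modif al' be') : al = al' -> be = be' ->
  (forall X, cheq (mcomp x X) (mcomp y X)) -> cheq (D := FunCat C D) x y.
Proof.
  intros -> -> H. enough (x = y) by (subst; reflexivity).
  apply modif_ext; intros X; apply cheq_eq, H.
Qed.

Lemma funcat_cheq_components {F G : Fun2 C D} {al be al' be' : Nat2 F G}
  (x : Modif al be) (y : Modif al' be') : cheq (D := FunCat C D) x y ->
  forall X, cheq (mcomp x X) (mcomp y X).
Proof.
  intros H. destruct (cheq_ends _ _ H) as [-> ->].
  apply cheq_eq in H. subst. reflexivity.
Qed.

Lemma funcat_invertible2_components {F G : Fun2 C D} {al be : Nat2 F G} (x : Modif al be) :
  invertible2 (D := FunCat C D) x -> forall X, invertible2 (mcomp x X).
Proof.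
  intros [y [H1 H2]] X. exists (mcomp y X). split.
  - exact (f_equal (fun n : Modif al al => mcomp n X) H1).
  - exact (f_equal (fun n : Modif be be => mcomp n X) H2).
Qed.

Lemma funcat_invertible2_of_components {F G : Fun2 C D} {al be : Nat2 F G}
  (x : Modif al be) :
  (forall X, invertible2 (mcomp x X)) -> invertible2 (D := FunCat C D) x.
Proof.
  intros H.
  pose (y := fun X => proj1_sig (constructive_indefinite_description _ (H X))).
  assert (Hy : forall X, vcomp (y X) (mcomp x X) = id2 _ /\ vcomp (mcomp x X) (y X) = id2 _)
    by (intros X; exact (proj2_sig (constructive_indefinite_description _ (H X)))).
  unshelve refine (ex_intro _ {| mcomp := y |} _).
  - intros X Y f.
    apply (inverse2_cheq D (hcomp (id2 (fhom G f)) (mcomp x X))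
                           (hcomp (mcomp x Y) (id2 (fhom F f)))).
    + rewrite (interchange _ DA), (v_idl _ DA), (proj1 (Hy X)), (h_id _ DA); reflexivity.
    + rewrite (interchange _ DA), (v_idl _ DA), (proj2 (Hy X)), (h_id _ DA); reflexivity.
    + rewrite (interchange _ DA), (v_idl _ DA), (proj1 (Hy Y)), (h_id _ DA); reflexivity.
    + rewrite (interchange _ DA), (v_idl _ DA), (proj2 (Hy Y)), (h_id _ DA); reflexivity.
    + apply (mnat x f).
  - split; apply modif_ext; intros X; apply Hy.
Qed.

Lemma pointwise_iso (P : Cls D) :
  (forall (a b : ob D) (f : hom a b), is_iso1 f -> P a b f) ->
  forall (F G : Fun2 C D) (al : Nat2 F G), is_iso1 (D := FunCat C D) al -> pointwise C D P F G al.
Proof.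
  intros HP F G al [be [H1 H2]] X. apply HP. exists (ncomp be X). split.
  - exact (nat2_eq_components H1 X).
  - exact (nat2_eq_components H2 X).
Qed.

End FunctorCategory.

Section EnhancedFactorization.
Variables (D : Cat2) (E M : Cls D).
Let DA := c2ax D.
Hypothesis Hefs : is_efs D E M.

Lemma efs_lift_unique {F F' G G' : ob D} (e : hom F F') (m : hom G G') (a' : hom F' G')
  (d1 d2 : hom F' G) (t1 : cell a' (comp1 m d1)) (t2 : cell a' (comp1 m d2)) :
  E _ _ e -> M _ _ m -> invertible2 t1 -> invertible2 t2 -> comp1 d1 e = comp1 d2 e ->
  cheq (whiskR t1 e) (whiskR t2 e) -> d1 = d2 /\ cheq t1 t2.
Proof.
  intros He Hm Hi1 Hi2 Hd Hc.
  pose (Psi := vcomp (cell_of_eq D (eq_sym ((c1_assoc _ DA) _ _ _ _ e d1 m))) (whiskR t1 e)).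
  assert (HPsi : invertible2 Psi).
  { apply invertible2_vcomp; [apply invertible2_whiskR, Hi1 | apply invertible2_cell_of_eq]. }
  destruct (efs_lift _ _ _ Hefs _ _ _ _ e m (comp1 d1 e) a' Psi He Hm HPsi)
    as [d [Pt [_ Huniq]]].
  assert (U1 := Huniq d1 t1 (conj eq_refl (conj Hi1 (cheq_sym _ _ (vcomp_cell_of_eq_l _ _ _))))).
  assert (U2 := Huniq d2 t2 (conj (eq_sym Hd) (conj Hi2
      (cheq_trans _ _ _ (cheq_sym _ _ Hc) (cheq_sym _ _ (vcomp_cell_of_eq_l _ _ _)))))).
  rewrite <- U2 in U1. exact (existT_cell_inj D a' m d1 d2 t1 t2 U1).
Qed.

Lemma efs_diagonal {F F' G G' : ob D} (e : hom F F') (m : hom G G') (al : hom F G)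
  (al' : hom F' G') : E _ _ e -> M _ _ m -> comp1 al' e = comp1 m al ->
  exists d, comp1 d e = al /\ comp1 m d = al'.
Proof.
  intros He Hm Heq.
  destruct (efs_lift _ _ _ Hefs _ _ _ _ e m al al' (cell_of_eq D Heq) He Hm
              (invertible2_cell_of_eq _ _)) as [d [Pt [Hs _]]].
  destruct (efs_lift_id _ _ _ Hefs _ _ _ _ e m al al' (cell_of_eq D Heq) He Hm
              (cell_of_eq_cheq _ _) d Pt Hs) as [Hmd _].
  exists d; split; [apply Hs | exact Hmd].
Qed.

End EnhancedFactorization.

Section Pointwise.
Variables (C D : Cat2) (E M : Cls D).
Let DA := c2ax D.
Hypothesis Hefs : is_efs D E M.
Hypothesis Hepi : forall (a b : ob D) (e : hom a b), E a b e -> is_2epi e.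

Section Lift.
Variables (F F' G G' : Fun2 C D) (e : Nat2 F F') (m : Nat2 G G') (al : Nat2 F G)
  (al' : Nat2 F' G')
  (Psi : Modif (nat_comp C D F F' G' al' e) (nat_comp C D F G G' m al)).
Hypotheses (He : pointwise C D E F F' e) (Hm : pointwise C D M G G' m)
  (HPsi : invertible2 (D := FunCat C D) Psi).

Lemma lift_component_ex X : exists d Pt,
  lift_sol (ncomp e X) (ncomp m X) (ncomp al X) (ncomp al' X) (mcomp Psi X) d Pt.
Proof.
  destruct (efs_lift _ _ _ Hefs _ _ _ _ (ncomp e X) (ncomp m X) (ncomp al X) (ncomp al' X)
    (mcomp Psi X) (He X) (Hm X) (funcat_invertible2_components Psi HPsi X))
    as [d [Pt [H _]]].
  eauto.
Qed.

Definition lift_hom X : hom (fob F' X) (fob G X) :=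
  proj1_sig (constructive_indefinite_description _ (lift_component_ex X)).

Definition lift_cell X : cell (ncomp al' X) (comp1 (ncomp m X) (lift_hom X)) :=
  proj1_sig (constructive_indefinite_description _
    (proj2_sig (constructive_indefinite_description _ (lift_component_ex X)))).

Lemma lift_cell_spec X : lift_sol (ncomp e X) (ncomp m X) (ncomp al X) (ncomp al' X)
  (mcomp Psi X) (lift_hom X) (lift_cell X).
Proof.
  exact (proj2_sig (constructive_indefinite_description _
    (proj2_sig (constructive_indefinite_description _ (lift_component_ex X))))).
Qed.

Lemma lift_cell_square (X Y : ob C) (f : hom X Y) :
  cheq (whiskR (hcomp (id2 (fhom G' f)) (lift_cell X)) (ncomp e X))
       (whiskR (hcomp (lift_cell Y) (id2 (fhom F' f))) (ncomp e X)).
Proof.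
  eapply (whiskR_pasting_square D);
    [apply (nat1 e f) | apply (lift_cell_spec X) | apply (lift_cell_spec Y) | apply (mnat Psi f)].
Qed.

(* Both sides of the naturality square are lifts of the same problem with
   respect to [e X] and [m Y], so they coincide. *)
Lemma lift_hom_nat1 (X Y : ob C) (f : hom X Y) :
  comp1 (fhom G f) (lift_hom X) = comp1 (lift_hom Y) (fhom F' f).
Proof.
  assert (QX : comp1 (fhom G' f) (comp1 (ncomp m X) (lift_hom X))
             = comp1 (ncomp m Y) (comp1 (fhom G f) (lift_hom X))).
  { rewrite (c1_assoc _ DA), (nat1 m f), <- (c1_assoc _ DA); reflexivity. }
  assert (QY : comp1 (comp1 (ncomp m Y) (lift_hom Y)) (fhom F' f)
             = comp1 (ncomp m Y) (comp1 (lift_hom Y) (fhom F' f))).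
  { rewrite (c1_assoc _ DA); reflexivity. }
  destruct (lift_cell_spec X) as [HX1 [HX2 _]], (lift_cell_spec Y) as [HY1 [HY2 _]].
  refine (proj1 (efs_lift_unique D E M Hefs (ncomp e X) (ncomp m Y)
     (comp1 (fhom G' f) (ncomp al' X)) _ _
     (vcomp (cell_of_eq D QX) (whiskL (fhom G' f) (lift_cell X)))
     (vcomp (cell_of_eq D QY)
        (vcomp (whiskR (lift_cell Y) (fhom F' f)) (cell_of_eq D (nat1 al' f))))
     (He X) (Hm Y) _ _ _ _)).
  - apply invertible2_vcomp; [apply invertible2_whiskL, HX2 | apply invertible2_cell_of_eq].
  - apply invertible2_vcomp; [| apply invertible2_cell_of_eq].
    apply invertible2_vcomp; [apply invertible2_cell_of_eq | apply invertible2_whiskR, HY2].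
  - rewrite <- !(c1_assoc _ DA), HX1, (nat1 e f), (c1_assoc _ DA), HY1.
    apply (nat1 al f).
  - unfold whiskR at 1 3.
    cheq_step (eapply hcomp_cheq_l; apply vcomp_cell_of_eq_l).
    eapply cheq_trans; [|apply cheq_sym, hcomp_cheq_l; apply vcomp_cell_of_eq_l].
    eapply cheq_trans; [|apply cheq_sym, hcomp_cheq_l; apply vcomp_cell_of_eq_r].
    apply lift_cell_square.
Qed.

Lemma lift_hom_nat2 (X Y : ob C) (f g : hom X Y) (p : cell f g) :
  cheq (hcomp (fcell G p) (id2 (lift_hom X))) (hcomp (id2 (lift_hom Y)) (fcell F' p)).
Proof.
  destruct (lift_cell_spec X) as [HX1 _], (lift_cell_spec Y) as [HY1 _].
  apply (is_2epi_cheq D (ncomp e X) (Hepi _ _ _ (He X)));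
    [apply lift_hom_nat1 | apply lift_hom_nat1 |].
  unfold whiskR.
  cheq_step (eapply cheq_sym, (h_assoc _ DA)).
  cheq_step (eapply hcomp_cheq_r; apply h_id_cheq).
  cheq_step (eapply hcomp_cheq_r; apply id2_cheq; exact HX1).
  cheq_step (eapply (nat2 al p)).
  cheq_step (eapply hcomp_cheq_l; apply id2_cheq; symmetry; exact HY1).
  cheq_step (eapply hcomp_cheq_l; apply cheq_sym, h_id_cheq).
  cheq_step (eapply cheq_sym, (h_assoc _ DA)).
  cheq_step (eapply hcomp_cheq_r; apply cheq_sym, (nat2 e p)).
  apply (h_assoc _ DA).
Qed.

Definition lift_nat : Nat2 F' G :=
  {| ncomp := lift_hom; nat1 := lift_hom_nat1; nat2 := lift_hom_nat2 |}.

Lemma lift_cell_mnat (X Y : ob C) (f : hom X Y) :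
  cheq (hcomp (id2 (fhom G' f)) (lift_cell X)) (hcomp (lift_cell Y) (id2 (fhom F' f))).
Proof.
  apply (is_2epi_cheq D (ncomp e X) (Hepi _ _ _ (He X))).
  - apply (nat1 al' f).
  - rewrite (c1_assoc _ DA), (nat1 m f), <- (c1_assoc _ DA), lift_hom_nat1, (c1_assoc _ DA).
    reflexivity.
  - apply lift_cell_square.
Qed.

Definition lift_modif : Modif al' (nat_comp C D F' G G' m lift_nat) :=
  Build_Modif C D F' G' al' (nat_comp C D F' G G' m lift_nat) lift_cell lift_cell_mnat.

Lemma lift_modif_sol : lift_sol (D := FunCat C D) e m al al' Psi lift_nat lift_modif.
Proof.
  split; [| split].
  - apply nat2_ext; intros X; apply (lift_cell_spec X).
  - apply funcat_invertible2_of_components; intros X; apply (lift_cell_spec X).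
  - apply funcat_cheq_of_components; [reflexivity | |].
    + apply nat2_ext; intros X; simpl. rewrite <- (c1_assoc _ DA).
      f_equal. apply (lift_cell_spec X).
    + intros X; apply (lift_cell_spec X).
Qed.

Lemma lift_modif_unique (d : Nat2 F' G) (Pt : Modif al' (nat_comp C D F' G G' m d)) :
  lift_sol (D := FunCat C D) e m al al' Psi d Pt ->
  existT (fun x : Nat2 F' G => Modif al' (nat_comp C D F' G G' m x)) d Pt
  = existT (fun x : Nat2 F' G => Modif al' (nat_comp C D F' G G' m x)) lift_nat lift_modif.
Proof.
  intros [H1 [H2 H3]].
  assert (K : forall X, ncomp d X = lift_hom X /\ cheq (mcomp Pt X) (lift_cell X)).
  { intros X. destruct (lift_cell_spec X) as [HX1 [HX2 HX3]].
    apply (efs_lift_unique D E M Hefs (ncomp e X) (ncomp m X) (ncomp al' X) _ _ _ _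
             (He X) (Hm X) (funcat_invertible2_components Pt H2 X) HX2).
    - rewrite HX1. exact (nat2_eq_components H1 X).
    - eapply cheq_trans; [exact (funcat_cheq_components _ _ H3 X) | apply cheq_sym, HX3]. }
  assert (Hd : d = lift_nat) by (apply nat2_ext; intros X; apply K).
  subst d.
  assert (Hp : Pt = lift_modif) by (apply modif_ext; intros X; apply cheq_eq, K).
  subst Pt. reflexivity.
Qed.

End Lift.

Lemma pointwise_lift_id (F F' G G' : Fun2 C D) (e : Nat2 F F') (m : Nat2 G G')
  (al : Nat2 F G) (al' : Nat2 F' G')
  (Psi : Modif (nat_comp C D F F' G' al' e) (nat_comp C D F G G' m al)) :
  pointwise C D E F F' e -> pointwise C D M G G' m ->
  cheq (D := FunCat C D) Psi (modif_id C D F G' (nat_comp C D F F' G' al' e)) ->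
  forall (d : Nat2 F' G) (Pt : Modif al' (nat_comp C D F' G G' m d)),
  lift_sol (D := FunCat C D) e m al al' Psi d Pt ->
  nat_comp C D F' G G' m d = al' /\ cheq (D := FunCat C D) Pt (modif_id C D F' G' al').
Proof.
  intros He Hm Hc d Pt [H1 [H2 H3]].
  assert (K : forall X, comp1 (ncomp m X) (ncomp d X) = ncomp al' X /\
                        cheq (mcomp Pt X) (id2 (ncomp al' X))).
  { intros X.
    apply (efs_lift_id _ _ _ Hefs _ _ _ _ (ncomp e X) (ncomp m X) (ncomp al X) (ncomp al' X)
      (mcomp Psi X) (He X) (Hm X) (funcat_cheq_components _ _ Hc X)).
    split; [| split].
    - exact (nat2_eq_components H1 X).
    - exact (funcat_invertible2_components Pt H2 X).
    - exact (funcat_cheq_components _ _ H3 X). }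
  assert (Hd : nat_comp C D F' G G' m d = al') by (apply nat2_ext; intros X; apply K).
  split; [exact Hd |].
  apply funcat_cheq_of_components; [reflexivity | exact Hd | intros X; apply K].
Qed.

Section TwoCell.
Variables (F F' G G' : Fun2 C D) (e : Nat2 F F') (m : Nat2 G G') (a1 a2 : Nat2 F G)
  (a1' a2' : Nat2 F' G') (Phi : Modif a1 a2) (Phi' : Modif a1' a2') (d1 d2 : Nat2 F' G).
Hypotheses (He : pointwise C D E F F' e) (Hm : pointwise C D M G G' m)
  (Hsq1 : nat_comp C D F F' G' a1' e = nat_comp C D F G G' m a1)
  (Hsq2 : nat_comp C D F F' G' a2' e = nat_comp C D F G G' m a2)
  (HPhi : cheq (D := FunCat C D) (whiskL (D := FunCat C D) m Phi)
                                  (whiskR (D := FunCat C D) Phi' e))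
  (Hd1e : nat_comp C D F F' G d1 e = a1) (Hd1m : nat_comp C D F' G G' m d1 = a1')
  (Hd2e : nat_comp C D F F' G d2 e = a2) (Hd2m : nat_comp C D F' G G' m d2 = a2').

Lemma diag_cell_ex X : exists Dl : cell (ncomp d1 X) (ncomp d2 X),
  cheq (whiskR Dl (ncomp e X)) (mcomp Phi X) /\ cheq (whiskL (ncomp m X) Dl) (mcomp Phi' X).
Proof.
  destruct (efs_2cell _ _ _ Hefs _ _ _ _ (ncomp e X) (ncomp m X) _ _ _ _ (mcomp Phi X)
    (mcomp Phi' X) (He X) (Hm X) (nat2_eq_components Hsq1 X) (nat2_eq_components Hsq2 X)
    (funcat_cheq_components _ _ HPhi X) (ncomp d1 X) (ncomp d2 X) (nat2_eq_components Hd1e X)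
    (nat2_eq_components Hd1m X) (nat2_eq_components Hd2e X) (nat2_eq_components Hd2m X))
    as [Dl [HD _]].
  exists Dl; exact HD.
Qed.

Definition diag_cell X : cell (ncomp d1 X) (ncomp d2 X) :=
  proj1_sig (constructive_indefinite_description _ (diag_cell_ex X)).

Lemma diag_cell_spec X : cheq (whiskR (diag_cell X) (ncomp e X)) (mcomp Phi X) /\
  cheq (whiskL (ncomp m X) (diag_cell X)) (mcomp Phi' X).
Proof. exact (proj2_sig (constructive_indefinite_description _ (diag_cell_ex X))). Qed.

Lemma diag_cell_mnat (X Y : ob C) (f : hom X Y) :
  cheq (hcomp (id2 (fhom G f)) (diag_cell X)) (hcomp (diag_cell Y) (id2 (fhom F' f))).
Proof.
  apply (is_2epi_cheq D (ncomp e X) (Hepi _ _ _ (He X))); [apply (nat1 d1 f) | apply (nat1 d2 f) |].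
  eapply (whiskR_pasting_square D);
    [apply (nat1 e f) | apply (diag_cell_spec X) | apply (diag_cell_spec Y) | apply (mnat Phi f)].
Qed.

Definition diag_modif : Modif d1 d2 := {| mcomp := diag_cell; mnat := diag_cell_mnat |}.

Lemma pointwise_2cell :
  exists! Dl : Modif d1 d2,
    cheq (D := FunCat C D) (whiskR (D := FunCat C D) Dl e) Phi /\
    cheq (D := FunCat C D) (whiskL (D := FunCat C D) m Dl) Phi'.
Proof.
  exists diag_modif. split; [split |].
  - apply funcat_cheq_of_components; [exact Hd1e | exact Hd2e | intros X; apply diag_cell_spec].
  - apply funcat_cheq_of_components; [exact Hd1m | exact Hd2m | intros X; apply diag_cell_spec].
  - intros Dl [HDl _]. apply modif_ext; intros X.
    apply (Hepi _ _ _ (He X)), cheq_eq.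
    eapply cheq_trans; [apply (diag_cell_spec X) | apply cheq_sym].
    exact (funcat_cheq_components _ _ HDl X).
Qed.

End TwoCell.

Section Factorization.
Hypothesis Hsep : separates_parallel_pairs E M.
Variables (F G : Fun2 C D) (al : Nat2 F G).

Lemma component_factorization_ex X : exists p : {c : ob D & (hom (fob F X) c * hom c (fob G X))%type},
  E _ _ (fst (projT2 p)) /\ M _ _ (snd (projT2 p)) /\
  ncomp al X = comp1 (snd (projT2 p)) (fst (projT2 p)).
Proof.
  destruct (efs_fact _ _ _ Hefs _ _ (ncomp al X)) as [c [e [m [HE [HM Hf]]]]].
  exists (existT _ c (e, m)); simpl; auto.
Qed.

Let factorization X := proj1_sig (constructive_indefinite_description _ (component_factorization_ex X)).
Definition img_ob X : ob D := projT1 (factorization X).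
Definition img_e X : hom (fob F X) (img_ob X) := fst (projT2 (factorization X)).
Definition img_m X : hom (img_ob X) (fob G X) := snd (projT2 (factorization X)).

Lemma img_spec X : E _ _ (img_e X) /\ M _ _ (img_m X) /\ ncomp al X = comp1 (img_m X) (img_e X).
Proof. exact (proj2_sig (constructive_indefinite_description _ (component_factorization_ex X))). Qed.

Lemma img_square {X Y : ob C} (f : hom X Y) :
  comp1 (comp1 (fhom G f) (img_m X)) (img_e X) = comp1 (img_m Y) (comp1 (img_e Y) (fhom F f)).
Proof.
  rewrite <- (c1_assoc _ DA), <- (proj2 (proj2 (img_spec X))), (nat1 al f),
    (proj2 (proj2 (img_spec Y))), (c1_assoc _ DA). reflexivity.
Qed.

Lemma img_hom_ex {X Y : ob C} (f : hom X Y) : exists d : hom (img_ob X) (img_ob Y),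
  comp1 d (img_e X) = comp1 (img_e Y) (fhom F f) /\
  comp1 (img_m Y) d = comp1 (fhom G f) (img_m X).
Proof.
  apply (efs_diagonal D E M Hefs); [apply (img_spec X) | apply (img_spec Y) | apply img_square].
Qed.

Definition img_hom {X Y : ob C} (f : hom X Y) :=
  proj1_sig (constructive_indefinite_description _ (img_hom_ex f)).

Lemma img_hom_spec {X Y : ob C} (f : hom X Y) :
  comp1 (img_hom f) (img_e X) = comp1 (img_e Y) (fhom F f) /\
  comp1 (img_m Y) (img_hom f) = comp1 (fhom G f) (img_m X).
Proof. exact (proj2_sig (constructive_indefinite_description _ (img_hom_ex f))). Qed.

Lemma img_hom_ext {X Y : ob C} (u v : hom (img_ob X) (img_ob Y)) :
  comp1 u (img_e X) = comp1 v (img_e X) -> comp1 (img_m Y) u = comp1 (img_m Y) v -> u = v.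
Proof.
  intros Hu Hv. apply Hsep.
  - exists (fob F X), (img_e X); split; [apply (img_spec X) | exact Hu].
  - exists (fob G Y), (img_m Y); split; [apply (img_spec Y) | exact Hv].
Qed.

Lemma img_hom_id (X : ob C) : img_hom (id1 X) = id1 (img_ob X).
Proof.
  apply img_hom_ext.
  - rewrite (proj1 (img_hom_spec _)), (fid1 _ _ F), (c1_idr _ DA), (c1_idl _ DA).
    reflexivity.
  - rewrite (proj2 (img_hom_spec _)), (fid1 _ _ G), (c1_idr _ DA), (c1_idl _ DA).
    reflexivity.
Qed.

Lemma img_hom_comp (X Y Z : ob C) (f : hom X Y) (g : hom Y Z) :
  img_hom (comp1 g f) = comp1 (img_hom g) (img_hom f).
Proof.
  apply img_hom_ext.
  - rewrite (proj1 (img_hom_spec _)), (fcomp1 _ _ F),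
      <- (c1_assoc _ DA _ _ _ _ (img_e X) (img_hom f) (img_hom g)), (proj1 (img_hom_spec f)),
      (c1_assoc _ DA _ _ _ _ (fhom F f) (img_e Y) (img_hom g)), (proj1 (img_hom_spec g)),
      <- (c1_assoc _ DA _ _ _ _ (fhom F f) (fhom F g) (img_e Z)).
    reflexivity.
  - rewrite (proj2 (img_hom_spec _)), (fcomp1 _ _ G),
      (c1_assoc _ DA _ _ _ _ (img_hom f) (img_hom g) (img_m Z)), (proj2 (img_hom_spec g)),
      <- (c1_assoc _ DA _ _ _ _ (img_hom f) (img_m Y) (fhom G g)), (proj2 (img_hom_spec f)),
      (c1_assoc _ DA _ _ _ _ (img_m X) (fhom G f) (fhom G g)).
    reflexivity.
Qed.

Lemma img_cell_ex {X Y : ob C} {f g : hom X Y} (p : cell f g) :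
  exists x : cell (img_hom f) (img_hom g),
    cheq (hcomp x (id2 (img_e X))) (hcomp (id2 (img_e Y)) (fcell F p)) /\
    cheq (hcomp (id2 (img_m Y)) x) (hcomp (fcell G p) (id2 (img_m X))).
Proof.
  destruct (efs_2cell _ _ _ Hefs _ _ _ _ (img_e X) (img_m Y) _ _ _ _
    (whiskL (img_e Y) (fcell F p)) (whiskR (fcell G p) (img_m X)) (proj1 (img_spec X))
    (proj1 (proj2 (img_spec Y))) (img_square f) (img_square g))
    with (d1 := img_hom f) (d2 := img_hom g) as [x [Hx _]];
    try apply img_hom_spec.
  - unfold whiskL, whiskR.
    cheq_step (eapply (h_assoc _ DA)).
    cheq_step (eapply hcomp_cheq_l; apply h_id_cheq).
    cheq_step (eapply hcomp_cheq_l; apply id2_cheq; symmetry; apply (img_spec Y)).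
    cheq_step (eapply cheq_sym, (nat2 al p)).
    cheq_step (eapply hcomp_cheq_r; apply id2_cheq; apply (img_spec X)).
    cheq_step (eapply hcomp_cheq_r; apply cheq_sym, h_id_cheq).
    apply (h_assoc _ DA).
  - exists x; exact Hx.
Qed.

Definition img_cell {X Y : ob C} {f g : hom X Y} (p : cell f g) : cell (img_hom f) (img_hom g) :=
  proj1_sig (constructive_indefinite_description _ (img_cell_ex p)).

Lemma img_cell_spec {X Y : ob C} {f g : hom X Y} (p : cell f g) :
  cheq (hcomp (img_cell p) (id2 (img_e X))) (hcomp (id2 (img_e Y)) (fcell F p)) /\
  cheq (hcomp (id2 (img_m Y)) (img_cell p)) (hcomp (fcell G p) (id2 (img_m X))).
Proof. exact (proj2_sig (constructive_indefinite_description _ (img_cell_ex p))). Qed.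

Lemma img_cell_id (X Y : ob C) (f : hom X Y) : img_cell (id2 f) = id2 (img_hom f).
Proof.
  apply (Hepi _ _ _ (proj1 (img_spec X))), cheq_eq. unfold whiskR.
  cheq_step (eapply (img_cell_spec (id2 f))).
  rewrite (fid2 _ _ F).
  cheq_step (eapply h_id_cheq).
  cheq_step (eapply id2_cheq; symmetry; apply (img_hom_spec f)).
  apply cheq_sym, h_id_cheq.
Qed.

Lemma img_cell_vcomp (X Y : ob C) (f g h : hom X Y) (x : cell f g) (y : cell g h) :
  img_cell (vcomp y x) = vcomp (img_cell y) (img_cell x).
Proof.
  apply (Hepi _ _ _ (proj1 (img_spec X))), cheq_eq.
  rewrite whiskR_vcomp. unfold whiskR.
  cheq_step (eapply (img_cell_spec (vcomp y x))).
  rewrite (fvcomp _ _ F).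
  change (hcomp (id2 (img_e Y)) (vcomp (fcell F y) (fcell F x)))
    with (whiskL (img_e Y) (vcomp (fcell F y) (fcell F x))).
  rewrite whiskL_vcomp. unfold whiskL.
  apply vcomp_cheq; apply cheq_sym, img_cell_spec.
Qed.

Lemma img_cell_hcomp (X Y Z : ob C) (f f' : hom X Y) (g g' : hom Y Z)
  (p : cell f f') (q : cell g g') :
  cheq (img_cell (hcomp q p)) (hcomp (img_cell q) (img_cell p)).
Proof.
  apply (is_2epi_cheq D (img_e X) (Hepi _ _ _ (proj1 (img_spec X))));
    [apply img_hom_comp | apply img_hom_comp |].
  unfold whiskR.
  cheq_step (eapply (img_cell_spec (hcomp q p))).
  cheq_step (eapply hcomp_cheq_r; apply (fhcomp _ _ F)).
  cheq_step (eapply (h_assoc _ DA)).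
  cheq_step (eapply hcomp_cheq_l; apply cheq_sym, (img_cell_spec q)).
  cheq_step (eapply cheq_sym, (h_assoc _ DA)).
  cheq_step (eapply hcomp_cheq_r; apply cheq_sym, (img_cell_spec p)).
  apply (h_assoc _ DA).
Qed.

Definition img_fun : Fun2 C D :=
  {| fob := img_ob; fhom := fun X Y f => img_hom f; fcell := fun X Y f g p => img_cell p;
     fid1 := img_hom_id; fcomp1 := img_hom_comp; fid2 := img_cell_id;
     fvcomp := img_cell_vcomp; fhcomp := img_cell_hcomp |}.

Definition img_e_nat : Nat2 F img_fun :=
  Build_Nat2 C D F img_fun img_e (fun X Y f => proj1 (img_hom_spec f))
    (fun X Y f g p => proj1 (img_cell_spec p)).

Definition img_m_nat : Nat2 img_fun G :=
  Build_Nat2 C D img_fun G img_m (fun X Y f => eq_sym (proj2 (img_hom_spec f)))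
    (fun X Y f g p => cheq_sym _ _ (proj2 (img_cell_spec p))).

Lemma pointwise_factorization :
  pointwise C D E F img_fun img_e_nat /\ pointwise C D M img_fun G img_m_nat /\
  al = nat_comp C D F img_fun G img_m_nat img_e_nat.
Proof.
  split; [| split].
  - intros X; apply (img_spec X).
  - intros X; apply (img_spec X).
  - apply nat2_ext; intros X; apply (img_spec X).
Qed.

End Factorization.
End Pointwise.

Theorem proposition2p8 (D C : Cat2) (E M : Cls D) :
  is_efs D E M ->
  separates_parallel_pairs E M ->
  (forall (a b : ob D) (e : hom a b), E a b e -> is_2epi e) ->
  (forall (a b : ob D) (m : hom a b), M a b m -> is_2mono m) ->
  is_efs (FunCat C D) (pointwise C D E) (pointwise C D M).
Proof.
  intros Hefs Hsep Hepi _.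
  constructor.
  - apply pointwise_iso, (efs_E_iso _ _ _ Hefs).
  - apply pointwise_iso, (efs_M_iso _ _ _ Hefs).
  - intros F G al.
    exists (img_fun C D E M Hefs Hepi Hsep F G al), (img_e_nat C D E M Hefs Hepi Hsep F G al),
      (img_m_nat C D E M Hefs Hepi Hsep F G al).
    apply pointwise_factorization.
  - intros F F' G G' e m al al' Psi He Hm HPsi.
    exists (lift_nat C D E M Hefs Hepi F F' G G' e m al al' Psi He Hm HPsi),
      (lift_modif C D E M Hefs Hepi F F' G G' e m al al' Psi He Hm HPsi).
    split; [apply lift_modif_sol | apply lift_modif_unique].
  - exact (pointwise_lift_id C D E M Hefs).
  - intros F F' G G' e m a1 a2 a1' a2' Phi Phi' He Hm Hsq1 Hsq2 HPhi d1 d2.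
    apply (pointwise_2cell C D E M Hefs Hepi); assumption.
Qed.
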